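(* Assume (A1), (A2), let $\kappa\ge\max_{|\xi|\le\beta}|f_0'(\xi)|$, and let $u_0$, $g$ be as follows: $u_0\in\mathcal X$ with $|u_0|\le\beta$ on $\widehat\Omega$, and (Case (C1)) $g\in C([0,\infty);\partial X)$ with $g(0,\cdot)=u_0$ on $\Omega_c^*$ and $|g(t,x)|\le\beta$ for all $t\ge0$, $x\in\Omega_c^*$. For a time step $\tau>0$ and $t_n=n\tau$, define the ETD1 scheme: $v^0=u_0$ and, for $n\ge0$, $v^{n+1}=w^n(\tau)$, where $w^n:[0,\tau]\to\mathcal X$ solves $$w^n_s+\kappa w^n=\mathcal Lw^n+\mathcal N[v^n],\ s\in(0,\tau],\ x\in\Omega^*;\quad w^n(s,x)=g(t_n+s,x),\ s\in[0,\tau],\ x\in\Omega_c^*;\quad w^n(0,x)=v^n(x),\ x\in\widehat\Omega,$$ with $\mathcal N[w](x)=\kappa w(x)+f_0(w(x))$. Then for every $\tau>0$, $\|v^n\|\le\beta$ for all $n\ge0$. The same holds in Case (C2) (periodic $u_0$, no boundary equation).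
   Context: Domain setting: one of (D1) $\Omega\subset\mathbb{R}^d$ is open, connected, bounded with Lipschitz boundary $\partial\Omega$; $\Omega_c\subset\mathbb{R}^d$ is a closed connected set with $\Omega_c\cap\Omega=\emptyset$ and $\partial\Omega\subset\Omega_c$; (D2) (discrete) given sets $\tilde\Omega,\tilde\Omega_c$ as in (D1) and the finite set $\Sigma$ of nodes of a mesh of $\tilde\Omega\cup\tilde\Omega_c$, put $\Omega=\tilde\Omega\cap\Sigma$, $\partial\Omega=\partial\tilde\Omega\cap\Sigma$, $\Omega_c=\tilde\Omega_c\cap\Sigma$. In both cases $\overline\Omega=\Omega\cup\partial\Omega$, $\widehat\Omega=\Omega\cup\Omega_c$; if $\Omega_c=\partial\Omega$ set $\Omega^*=\Omega$, $\Omega_c^*=\partial\Omega$, otherwise $\Omega^*=\overline\Omega$, $\Omega_c^*=\Omega_c\setminus\partial\Omega$. For $D\subset\mathbb{R}^d$, $C(D)$ denotes the real functions on $D$ that are sequentially continuous relative to $D$ (every function on a discrete set is continuous), and $C_b(D)$ its bounded elements. Let $\mathcal X=C(\overline\Omega)$ if $\Omega_c=\partial\Omega$, and otherwise $\mathcal X=\{w:\widehat\Omega\to\mathbb R:\ w|_{\overline\Omega}\in C(\overline\Omega),\ w|_{\Omega_c^*}\in C_b(\Omega_c^* )\}$, with norm $\|w\|=\sup_{x\in\widehat\Omega}|w(x)|$. Boundary cases: (C1) $X=\{w|_{\Omega^*}: w\in\mathcal X,\ w|_{\Omega_c^*}=0\}$, identified (via zero extension) with the subspace $\{w\in\mathcal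 X: w|_{\Omega_c^*}=0\}$, and $\partial X=C_b(\Omega_c^* )$; (C2) (periodic) $\Omega=\prod_{i=1}^d(a_i,b_i)$ (in (D2), its node set), and $X$ consists of restrictions to $\overline\Omega_+=\prod_i(a_i,b_i]$ of continuous $\Omega$-periodic functions on $\mathbb R^d$ (resp. periodic grid functions), identified with these periodic functions. $X$ carries the sup norm. Operators: $\mathcal L:D(\mathcal L)\to C_b(\Omega^* )$ is linear with $D(\mathcal L)\subset\mathcal X$. In (D1), $D(\mathcal L_0)=\{w\in D(\mathcal L)\cap X:\ \mathcal L w\in X\}$; in (D2), $D(\mathcal L_0)=X$; $\mathcal L_0=\mathcal L|_{D(\mathcal L_0)}:D(\mathcal L_0)\to X$. Assumption (A1): (a) for every $w\in D(\mathcal L)$ and $x_0\in\Omega^*$ with $w(x_0)=\sup_{x\in\widehat\Omega}w(x)$, one has $\mathcal Lw(x_0)\le 0$; (b) $D(\mathcal L_0)$ is dense in $X$; (c) there exists $\lambda_0>0$ such that $\lambda_0\mathcal I-\mathcal L_0:D(\mathcal L_0)\to X$ is surjective. Assumption (A2): $f:C_b(\Omega^* )\to C_b(\Omega^* )$ is given by $f[w](x)=f_0(w(x))$ for a continuously differentiable $f_0:\mathbb R\to\mathbb R$, and there is $\beta>0$ with $f_0(\beta)\le 0\le f_0(-\beta)$. The linear problem defining $w^n$ has a unique solution, so the scheme is well defined. *)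

From HB Require Import structures.
From mathcomp Require Import all_boot all_order all_algebra.
From mathcomp Require Import all_classical all_reals all_analysis.
Set Implicit Arguments. Unset Strict Implicit. Unset Printing Implicit Defensive.
Import Order.TTheory GRing.Theory Num.Theory.
Import numFieldNormedType.Exports.
Local Open Scope classical_set_scope.
Local Open Scope ring_scope.

Section Defs.
Variables (R : realType) (d : nat).
Local Notation P := 'rV[R]_d.

Definition bdry (A : set P) : set P := closure A `\` interior A.

(** Lipschitz (graph) boundary: near each boundary point, after an orthogonal
    change of coordinates, the domain is the subgraph of a Lipschitz function
    of the remaining coordinates (the coordinate [i] being the vertical one). *)
Definition lipschitz_boundary (A : set P) : Prop :=
  forall x, bdry A x ->
  exists (U : set P) (Q : 'M[R]_d) (i : 'I_d) (gam : P -> R) (Lc : R),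
    [/\ open U /\ U x, Q *m Q^T = 1%:M,
        (forall y y' : P, (forall j, j != i -> y 0 j = y' 0 j) -> gam y = gam y'),
        (forall y y' : P, `|gam y - gam y'| <= Lc * `|y - y'|) &
        (forall y : P, U y -> (A y <-> (y *m Q) 0 i < gam (y *m Q)))].

Definition domain_D1 (Om Omc : set P) : Prop :=
  [/\ open Om, connected Om, bounded_set Om & lipschitz_boundary Om] /\
  [/\ closed Omc, connected Omc, Omc `&` Om = set0 & bdry Om `<=` Omc].

Definition seq_cont_on (D : set P) (f : P -> R) : Prop :=
  forall (x : P) (u : nat -> P), D x -> (forall n, D (u n)) ->
    u n @[n --> \oo] --> x -> f (u n) @[n --> \oo] --> f x.

Definition bounded_on (D : set P) (f : P -> R) : Prop :=
  exists M : R, forall x, D x -> `|f x| <= M.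

(** data of a setting: [disc] = discrete case (D2), [per] = periodic case (C2);
    [Om0], [Omc0] are Omega, Omega_c (D1) resp. tilde Omega, tilde Omega_c (D2),
    [Sig] the node set (D2 only), [a], [b] the box corners (C2 only). *)
Record setting := Setting {
  disc : bool; per : bool;
  Om0 : set P; Omc0 : set P; Sig : set P; a : P; b : P }.

Definition box (S : setting) : set P :=
  [set x | forall i, a S 0 i < x 0 i < b S 0 i].
Definition box_plus (S : setting) : set P :=
  [set x | forall i, a S 0 i < x 0 i <= b S 0 i].

Definition valid_setting (S : setting) : Prop :=
  domain_D1 (Om0 S) (Omc0 S) /\
  (disc S -> finite_set (Sig S) /\ Sig S `<=` Om0 S `|` Omc0 S) /\
  (per S -> (forall i, a S 0 i < b S 0 i) /\ Om0 S = box S).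

Definition Om S : set P := if disc S then Om0 S `&` Sig S else Om0 S.
Definition Bd S : set P := if disc S then bdry (Om0 S) `&` Sig S else bdry (Om0 S).
Definition Omc S : set P := if disc S then Omc0 S `&` Sig S else Omc0 S.
Definition Ombar S : set P := Om S `|` Bd S.
Definition Omhat S : set P := Om S `|` Omc S.
Definition Ostar1 S : set P :=
  [set x | (Omc S = Bd S /\ Om S x) \/ (Omc S <> Bd S /\ Ombar S x)].
Definition Ocstar1 S : set P :=
  [set x | (Omc S = Bd S /\ Bd S x) \/ (Omc S <> Bd S /\ (Omc S `\` Bd S) x)].
Definition Oplus S : set P :=
  if disc S then box_plus S `&` Sig S else box_plus S.

(** points where functions live (hat Omega; in (C2) the closed-right box
    [Omega_+], resp. its nodes), Omega^*, and Omega_c^* (empty in (C2)) *)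
Definition Ohat S : set P := if per S then Oplus S else Omhat S.
Definition Ostar S : set P := if per S then Oplus S else Ostar1 S.
Definition Ocstar S : set P := if per S then set0 else Ocstar1 S.

(** Functions are represented as maps [P -> R] vanishing outside [Ohat S]. *)
Definition vanish_off S (w : P -> R) : Prop := forall x, ~ Ohat S x -> w x = 0.

Definition calX_C1 S (w : P -> R) : Prop :=
  vanish_off S w /\
  ((Omc S = Bd S /\ seq_cont_on (Ombar S) w) \/
   (Omc S <> Bd S /\ seq_cont_on (Ombar S) w /\
      seq_cont_on (Ocstar1 S) w /\ bounded_on (Ocstar1 S) w)).

Definition periodic S (F : P -> R) : Prop :=
  forall x i, F (x + (b S 0 i - a S 0 i) *: delta_mx 0 i) = F x.

Definition X_C2 S (w : P -> R) : Prop :=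
  vanish_off S w /\
  exists F : P -> R, periodic S F /\ (disc S \/ continuous F) /\
    forall x, Ohat S x -> F x = w x.

Definition calX S (w : P -> R) : Prop := if per S then X_C2 S w else calX_C1 S w.
Definition Xsp S (w : P -> R) : Prop :=
  if per S then X_C2 S w else calX_C1 S w /\ forall x, Ocstar S x -> w x = 0.

Definition inX_star S (h : P -> R) : Prop :=
  exists w, Xsp S w /\ forall x, Ostar S x -> w x = h x.

Definition DL0 S (DL : set (P -> R)) (L : (P -> R) -> (P -> R)) : set (P -> R) :=
  if disc S then Xsp S else [set w | DL w /\ Xsp S w /\ inX_star S (L w)].

Definition operator_L S (DL : set (P -> R)) (L : (P -> R) -> (P -> R)) : Prop :=
  [/\ DL `<=` calX S /\ DL (fun _ => 0),
      (forall (c : R) w1 w2, DL w1 -> DL w2 -> DL (fun x => c * w1 x + w2 x)),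
      (forall (c : R) w1 w2, DL w1 -> DL w2 -> forall x, Ostar S x ->
          L (fun y => c * w1 y + w2 y) x = c * L w1 x + L w2 x),
      (forall w, DL w -> seq_cont_on (Ostar S) (L w) /\ bounded_on (Ostar S) (L w)) &
      (forall w, DL0 S DL L w -> DL w /\ inX_star S (L w))].

Definition A1 S (DL : set (P -> R)) (L : (P -> R) -> (P -> R)) : Prop :=
  [/\ (forall w x0, DL w -> Ostar S x0 -> (forall x, Ohat S x -> w x <= w x0) ->
          L w x0 <= 0),
      (forall w, Xsp S w -> forall e : R, 0 < e ->
          exists2 w', DL0 S DL L w' & forall x, Ohat S x -> `|w x - w' x| <= e) &
      (exists2 lam0 : R, 0 < lam0 & forall h, Xsp S h ->
          exists2 w, DL0 S DL L w & forall x, Ostar S x -> lam0 * w x - L w x = h x)].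

(** Assumption (A2) (f[w](x) = f0(w(x))) *)
Definition A2 (f0 : R -> R) (beta : R) : Prop :=
  [/\ (forall x, derivable f0 x 1), continuous (derive1 f0), 0 < beta &
      f0 beta <= 0 <= f0 (- beta)].

Definition has_deriv_within (I : set R) (f : R -> R) (s l : R) : Prop :=
  forall e : R, 0 < e -> exists2 del : R, 0 < del &
    forall h, h != 0 -> `|h| < del -> I (s + h) -> `|(f (s + h) - f s) / h - l| <= e.

Definition Nop (kappa : R) (f0 : R -> R) (w : P -> R) : P -> R :=
  fun x => kappa * w x + f0 (w x).

Definition solves_step S (DL : set (P -> R)) (L : (P -> R) -> (P -> R))
    (kappa : R) (f0 : R -> R) (g : R -> P -> R) (tau t0 : R)
    (v : P -> R) (w : R -> P -> R) : Prop :=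
  [/\ (forall s, 0 <= s <= tau -> calX S (w s)) /\
      (forall s, 0 <= s <= tau -> forall e : R, 0 < e -> exists2 del : R, 0 < del &
          forall s', 0 <= s' <= tau -> `|s' - s| < del ->
            forall x, Ohat S x -> `|w s' x - w s x| <= e),
      (forall s, 0 < s <= tau -> DL (w s)),
      (forall s, 0 < s <= tau -> forall x, Ostar S x ->
          has_deriv_within [set r | 0 <= r <= tau] (fun r => w r x) s
            (L (w s) x + Nop kappa f0 v x - kappa * w s x)),
      (forall s, 0 <= s <= tau -> forall x, Ocstar S x -> w s x = g (t0 + s) x) &
      (forall x, Ohat S x -> w 0 x = v x)].

End Defs.

From HB Require Import structures.
From mathcomp Require Import all_boot all_order all_algebra finmap.
From mathcomp Require Import all_classical all_reals all_analysis.
From mathcomp Require Import ring lra.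
Import Order.TTheory GRing.Theory Num.Theory.
Import numFieldNormedType.Exports.
Local Open Scope classical_set_scope.
Local Open Scope ring_scope.

(* By induction on n it suffices to show that one step preserves the bound:
   if |v| <= beta on hat Omega and w solves the linear problem of the step, then
   |w(tau)| <= beta.  Applying the same argument to sigma * w for sigma = 1 and
   sigma = -1, one needs sigma * w(tau) <= beta.  This follows from an abstract
   parabolic maximum principle (section [max_principle]): for every eps > 0 the
   bound sigma * w(s) <= beta + eps (1 + s) propagates along [0, tau] by
   continuous induction, because at a first touching point x0 in Omega^* the
   spatial maximum gives L (sigma w) x0 <= 0 by (A1)(a), the stabilized
   nonlinearity satisfies |kappa xi + f0 xi| <= kappa beta for |xi| <= beta, so
   the time derivative is <= 0, whereas touching from below forces it to be
   >= eps.  The abstract principle needs that each sigma * w(s) either stays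
   below beta or attains its maximum on hat Omega; this is proved for the
   function space of every setting: by compactness of the closure of Omega in
   (D1), by finiteness in (D2), and by periodicity plus compactness of the
   closed box in (C2). *)

Definition attains_max {T : Type} {R : realType} (K : set T) (u : T -> R) : Prop :=
  exists2 x0, K x0 & forall x, K x -> u x <= u x0.

Lemma finite_attains_max (R : realType) (T : choiceType) (K : set T) (u : T -> R) :
  finite_set K -> K !=set0 -> attains_max K u.
Proof.
move=> /finite_fsetP [X ->] [x1 Xx1].
have [/= y _ ymax] := @arg_maxP _ _ _ [` Xx1]%fset xpredT (u \o val) isT.
exists (val y); first exact: valP.
by move=> x Xx; exact: (ymax [` Xx]%fset).
Qed.

Lemma continuous_induction (R : realType) (tau : R) (Q : R -> Prop) :
  0 <= tau -> Q 0 ->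
  (forall s : R, 0 < s <= tau -> (forall r : R, 0 <= r < s -> Q r) -> Q s) ->
  (forall s : R, 0 <= s < tau -> (forall r : R, 0 <= r <= s -> Q r) ->
     exists2 s' : R, s < s' & forall r : R, s < r <= s' -> Q r) ->
  Q tau.
Proof.
move=> tau_ge0 Q0 Qleft Qright.
pose A := [set s | 0 <= s <= tau /\ forall r, 0 <= r <= s -> Q r].
have A0 : A 0.
  split; first by rewrite lexx tau_ge0.
  by move=> r /andP[r0 r0']; rewrite (@le_anti _ _ r 0) ?r0 ?r0'.
have hsup : has_sup A by split; [exists 0 | exists tau => s [/andP[]]].
set ss := sup A.
have ss_ge0 : 0 <= ss by apply: sup_upper_bound.
have ss_le : ss <= tau by apply: ge_sup => [|s [/andP[]]] //; exists 0.
have Qbelow : forall r, 0 <= r < ss -> Q r.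
  move=> r /andP[r0 rss]; have [a [_ Qa] ra] := sup_gt (ex_intro _ 0 A0) rss.
  by apply: Qa; rewrite r0 ltW.
have Ass : A ss.
  split; first by rewrite ss_ge0 ss_le.
  move=> r /andP[r0]; rewrite le_eqVlt => /orP[/eqP->|rss]; last first.
    by apply: Qbelow; rewrite r0 rss.
  have [ss0|ss_gt0] := eqVneq ss 0; first by rewrite ss0.
  by apply: Qleft => //; rewrite lt_def ss_gt0 ss_ge0 ss_le.
have [ss_tau|ss_lt] := eqVneq ss tau; first by case: Ass => _; apply; rewrite ss_tau lexx tau_ge0.
have ss_lt' : ss < tau by rewrite lt_def eq_sym ss_lt ss_le.
have [s' ss_s' Qext] := Qright ss (ltac:(by rewrite ss_ge0 ss_lt')) (proj2 Ass).
pose r' := Num.min s' tau.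
have ss_lt_r' : ss < r' by rewrite lt_min ss_s' ss_lt'.
have Ar' : A r'.
  split; first by rewrite (le_trans ss_ge0 (ltW ss_lt_r')) ge_min lexx orbT.
  move=> r /andP[r0 rr']; have [rss|ssr] := leP r ss; first by case: Ass => _; apply; rewrite r0.
  by apply: Qext; rewrite ssr (le_trans rr') // ge_min lexx.
by have := sup_upper_bound hsup Ar'; rewrite -/ss leNgt ss_lt_r'.
Qed.

Lemma deriv_ge_left_slope (R : realType) (tau : R) (f : R -> R) (s l c : R) :
  has_deriv_within [set r | 0 <= r <= tau] f s l -> 0 < s <= tau ->
  (forall r : R, 0 <= r < s -> f r <= f s - c * (s - r)) -> c <= l.
Proof.
move=> fd /andP[s_gt0 s_le] fslope; apply/ler_addgt0Pr => e e_gt0.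
have [del del_gt0 fdel] := fd e e_gt0.
pose m := Num.min (del / 2) s.
have m_gt0 : 0 < m by rewrite lt_min s_gt0 divr_gt0.
have m_le : m <= s by rewrite ge_min lexx orbT.
have m_lt : m < del by rewrite gt_min; apply/orP; left; lra.
have quot_ge : c <= (f (s + - m) - f s) / - m.
  have := fslope (s + - m) ltac:(apply/andP; split; lra).
  by rewrite invrN mulrN -mulNr ler_pdivlMr //; nra.
have := fdel (- m) ltac:(by rewrite oppr_eq0 gt_eqF) ltac:(by rewrite normrN gtr0_norm)
  ltac:(by rewrite /=; apply/andP; split; lra).
move/ler_normlP => [_]; lra.
Qed.

Section max_principle.
Variables (R : realType) (T : Type) (Oh Os Oc : set T) (W : R -> T -> R).
Variables (tau beta kappa : R).
Hypotheses (tau_gt0 : 0 < tau) (kappa_ge0 : 0 <= kappa).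
Hypothesis Oh_split : forall x, Oh x -> Os x \/ Oc x.
Hypothesis W0_le : forall x, Oh x -> W 0 x <= beta.
Hypothesis Wbd_le : forall (s : R) x, 0 <= s <= tau -> Oc x -> W s x <= beta.
Hypothesis W_cont : forall s : R, 0 <= s <= tau -> forall e : R, 0 < e ->
  exists2 del : R, 0 < del & forall s' : R, 0 <= s' <= tau -> `|s' - s| < del ->
    forall x, Oh x -> `|W s' x - W s x| <= e.
Hypothesis W_max : forall s : R, 0 <= s <= tau ->
  (forall x, Oh x -> W s x <= beta) \/ attains_max Oh (W s).
Hypothesis W_deriv : forall (s : R) x0, 0 < s <= tau -> Oh x0 -> Os x0 ->
  (forall x, Oh x -> W s x <= W s x0) ->
  exists2 l, has_deriv_within [set r | 0 <= r <= tau] (fun r => W r x0) s l &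
    l <= kappa * (beta - W s x0).

Section fixed_slope.
Variable eps : R.
Hypothesis eps_gt0 : 0 < eps.

Definition below_line (s : R) : Prop :=
  forall x, Oh x -> W s x <= beta + eps * (1 + s).

Lemma below_line_left_closed s : 0 < s <= tau ->
  (forall r, 0 <= r < s -> below_line r) -> below_line s.
Proof.
move=> /andP[s_gt0 s_le] Qbelow x Ohx; apply/ler_addgt0Pr => e e_gt0.
have [del del_gt0 Wdel] := W_cont s ltac:(by rewrite ltW) e e_gt0.
pose m := Num.min (del / 2) s.
have m_gt0 : 0 < m by rewrite lt_min s_gt0 divr_gt0.
have m_le : m <= s by rewrite ge_min lexx orbT.
have m_lt : m < del by rewrite gt_min; apply/orP; left; lra.
have := Qbelow (s - m) ltac:(apply/andP; split; lra) x Ohx.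
have := Wdel (s - m) ltac:(apply/andP; split; lra)
  ltac:(by rewrite addrAC subrr add0r normrN gtr0_norm) x Ohx.
move=> /ler_normlP [? _] ?.
have : 0 <= eps * m by rewrite mulr_ge0 // ltW.
nra.
Qed.

Lemma below_line_gap s gap : 0 <= s < tau -> 0 < gap ->
  (forall x, Oh x -> W s x <= beta + eps * (1 + s) - gap) ->
  exists2 s', s < s' & forall r, s < r <= s' -> below_line r.
Proof.
move=> /andP[s_ge0 s_lt] gap_gt0 Wgap.
have [del del_gt0 Wdel] := W_cont s ltac:(by rewrite s_ge0 ltW) gap gap_gt0.
exists (Num.min (s + del / 2) tau); first by rewrite lt_min s_lt andbT; lra.
move=> r /andP[s_r]; rewrite le_min => /andP[r_le r_tau] x Ohx.
have := Wdel r ltac:(apply/andP; split; lra) ltac:(rewrite gtr0_norm; lra) x Ohx.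
have := Wgap x Ohx.
have : 0 <= eps * (r - s) by apply: mulr_ge0; [exact: ltW | lra].
move=> ? ? /ler_normlP [_ ?]; nra.
Qed.

(* The solution cannot touch the barrier from below: at a touching point the
   derivative would be both >= eps and <= -kappa eps (1 + s) <= 0. *)
Lemma below_line_no_touching s x0 : 0 <= s <= tau ->
  (forall r, 0 <= r < s -> below_line r) -> Oh x0 ->
  (forall x, Oh x -> W s x <= W s x0) -> W s x0 = beta + eps * (1 + s) -> False.
Proof.
move=> /andP[s_ge0 s_le] Qbelow Ohx0 x0_max Wx0.
have lift_gt0 : 0 < eps * (1 + s) by rewrite mulr_gt0 //; lra.
have s_gt0 : 0 < s.
  rewrite lt_def s_ge0 andbT; apply/eqP => s0.
  by rewrite s0 in Wx0 lift_gt0; have := W0_le x0 Ohx0; lra.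
case: (Oh_split x0 Ohx0) => [Osx0|Ocx0]; last first.
  by have := @Wbd_le s x0 (ltac:(by rewrite s_ge0 s_le)) Ocx0; lra.
have [l Wd l_le] := W_deriv s x0 ltac:(by rewrite s_gt0 s_le) Ohx0 Osx0 x0_max.
have eps_le : eps <= l.
  apply: (@deriv_ge_left_slope R tau (fun r => W r x0) s l eps Wd); first by rewrite s_gt0 s_le.
  move=> r hr; have := Qbelow r hr x0 Ohx0; rewrite Wx0; lra.
move: l_le; rewrite Wx0 => l_le.
have : 0 <= kappa * (eps * (1 + s)) by rewrite mulr_ge0 // ltW.
nra.
Qed.

Lemma below_line_right_open s : 0 <= s < tau ->
  (forall r, 0 <= r <= s -> below_line r) ->
  exists2 s', s < s' & forall r, s < r <= s' -> below_line r.
Proof.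
move=> /andP[s_ge0 s_lt] Qupto.
have s_in : 0 <= s <= tau by rewrite s_ge0 ltW.
have lift_gt0 : 0 < eps * (1 + s) by rewrite mulr_gt0 //; lra.
case: (W_max s s_in) => [Wle|[x0 Ohx0 x0_max]].
  apply: (@below_line_gap s (eps * (1 + s))) => //; first by rewrite s_ge0.
  by move=> x /Wle; lra.
have Wx0_le := Qupto s ltac:(by rewrite s_ge0 lexx) x0 Ohx0.
have [Wx0_lt|Wx0_eq] := ltP (W s x0) (beta + eps * (1 + s)); last first.
  exfalso; apply: (@below_line_no_touching s x0 s_in _ Ohx0 x0_max).
    by move=> r /andP[r0 rs]; apply: Qupto; rewrite r0 ltW.
  exact/le_anti/andP.
apply: (@below_line_gap s (beta + eps * (1 + s) - W s x0)).
- by rewrite s_ge0.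
- by rewrite subr_gt0.
- by move=> x /x0_max; lra.
Qed.

Lemma below_line_at_tau : below_line tau.
Proof.
apply: continuous_induction; first exact: ltW.
- by move=> x Ohx; rewrite addr0 mulr1 (le_trans (W0_le x Ohx)) // lerDl ltW.
- exact: below_line_left_closed.
- exact: below_line_right_open.
Qed.

End fixed_slope.

(* Letting eps -> 0. *)
Theorem max_principle x : Oh x -> W tau x <= beta.
Proof.
move=> Ohx; apply/ler_addgt0Pr => e e_gt0.
have tau1_gt0 : 0 < 1 + tau by rewrite addr_gt0.
have := @below_line_at_tau (e / (1 + tau)) (divr_gt0 e_gt0 tau1_gt0) x Ohx.
by rewrite divfK ?gt_eqF.
Qed.

End max_principle.

Lemma stabilized_nonlinearity_nondecreasing {R : realType} {f0 : R -> R} {beta kappa : R} :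
  A2 f0 beta -> (forall xi, `|xi| <= beta -> `|derive1 f0 xi| <= kappa) ->
  forall x y : R, - beta <= x -> x <= y -> y <= beta ->
    kappa * x + f0 x <= kappa * y + f0 y.
Proof.
case=> f0_der _ _ _ f0'_le.
pose h x := kappa * x + f0 x.
have h_is_der x : is_derive x (1 : R) h (kappa + derive1 f0 x).
  rewrite derive1E; apply: is_deriveD; last exact: derivableP.
  by rewrite -[X in is_derive _ _ _ X]mulr1; apply: is_deriveZ.
have h_der x : derivable h x 1 by exact: (h_is_der x).(ex_derive).
apply: ger0_derive1_ndecr.
- by move=> x _; exact: h_der.
- move=> x; rewrite in_itv /= => /andP[x_gt x_lt].
  have := h_is_der x => hx; rewrite derive1E derive_val.
  have : `|x| <= beta by rewrite ler_norml; apply/andP; split; lra.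
  by move/f0'_le/ler_normlP => [? _]; lra.
- by apply: derivable_within_continuous => x _; exact: h_der.
Qed.

(* Combined with f0 beta <= 0 <= f0 (-beta) from (A2), this gives
   |kappa xi + f0 xi| <= kappa beta on [-beta, beta]: N maps the beta-ball
   into the (kappa beta)-ball. *)
Lemma stabilized_nonlinearity_bound {R : realType} {f0 : R -> R} {beta kappa : R} :
  A2 f0 beta -> (forall xi, `|xi| <= beta -> `|derive1 f0 xi| <= kappa) ->
  forall xi : R, `|xi| <= beta -> `|kappa * xi + f0 xi| <= kappa * beta.
Proof.
move=> hA2 f0'_le xi; have [_ _ _ /andP[f0_beta f0_mbeta]] := hA2.
have mono := stabilized_nonlinearity_nondecreasing hA2 f0'_le.
rewrite ler_norml => /andP[lo hi]; rewrite ler_norml.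
have := mono _ _ (lexx _) lo hi; have := mono _ _ lo hi (lexx _).
move=> ? ?; apply/andP; split; lra.
Qed.

Lemma seq_cont_within {R : realType} {d : nat} {A : set 'rV[R]_d} {u : 'rV[R]_d -> R} :
  seq_cont_on A u -> {within A, continuous u}.
Proof.
move=> useq; apply/subspace_continuousP => x Ax.
apply/cvgrPdist_le => e e_gt0; apply: contrapT => not_near.
have bad n : exists y, [/\ A y, `|x - y| < n.+1%:R^-1 & e < `|u x - u y|].
  apply: contrapT => no_bad; apply: not_near.
  apply/nbhs_ballP; exists n.+1%:R^-1 => //= y.
  rewrite -ball_normE /= => xy Ay; rewrite leNgt; apply/negP => ey.
  by apply: no_bad; exists y.
have [y ybad] := choice bad.
have y_cvg : y n @[n --> \oo] --> x.
  apply/cvgrPdist_lt => e' e'_gt0.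
  near=> n; have [_ xy _] := ybad n; apply: lt_trans xy _.
  by near: n; exact: near_infty_natSinv_lt (PosNum e'_gt0).
have := useq x y Ax (fun n => let: And3 Ay _ _ := ybad n in Ay) y_cvg.
move/cvgrPdist_lt => /(_ e e_gt0) /filter_ex [n un].
by have [_ _ uy] := ybad n; move: un; rewrite ltNge (ltW uy).
Unshelve. all: by end_near.
Qed.

Lemma closure_compact (R : realType) (d : nat) (A : set 'rV[R]_d) :
  bounded_set A -> compact (closure A).
Proof.
move=> [M [M_real A_le]]; apply: bounded_closed_compact; last exact: closed_closure.
exists (M + 1); split; first by rewrite realD // real1.
move=> N MN x clx.
have [y [Ay xy]] := clx (ball x 1) (nbhsx_ballx x 1 ltr01).
have := A_le (N - 1) ltac:(lra) y Ay => /= y_le.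
rewrite -ball_normE /= in xy.
have h : `|x| <= `|x - y| + `|y| by rewrite (le_trans _ (ler_normD _ _)) // subrK.
by apply: le_trans h _; rewrite -[N](subrK 1) [leRHS]addrC lerD // ltW.
Qed.

Lemma periodic_shift_into_box (R : realType) (d : nat) (a b : 'rV[R]_d) (F : 'rV[R]_d -> R) :
  (forall i, a 0 i < b 0 i) ->
  (forall x i, F (x + (b 0 i - a 0 i) *: delta_mx 0 i) = F x) ->
  forall z : 'rV[R]_d, (forall i, a 0 i <= z 0 i <= b 0 i) ->
  exists2 z' : 'rV[R]_d, (forall i, a 0 i < z' 0 i <= b 0 i) & F z' = F z.
Proof.
move=> ab F_per z z_box.
suff shift k : exists z' : 'rV[R]_d, [/\ forall i, a 0 i <= z' 0 i <= b 0 i,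
    forall i : 'I_d, (i < k)%N -> a 0 i < z' 0 i & F z' = F z].
  have [z' [z'_box z'_gt Fz']] := shift d; exists z' => // i.
  by have /andP[_ ->] := z'_box i; rewrite z'_gt.
elim: k => [|k [z' [z'_box z'_gt Fz']]]; first by exists z.
have [kd|dk] := ltnP k d; last first.
  by exists z'; split => // i ik; apply: z'_gt; apply: leq_trans (ltn_ord i) dk.
pose i0 := Ordinal kd.
have lt_k1 (i : 'I_d) : (i < k.+1)%N -> i = i0 \/ (i < k)%N.
  by rewrite ltnS leq_eqVlt => /orP[/eqP ik|]; [left; apply/val_inj|right].
have [z'_a|z'_na] := eqVneq (z' 0 i0) (a 0 i0); last first.
  exists z'; split => // i /lt_k1[->|/z'_gt //].
  by have /andP[z'_ge _] := z'_box i0; rewrite lt_def z'_na.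
exists (z' + (b 0 i0 - a 0 i0) *: delta_mx 0 i0); split; last by rewrite F_per.
- move=> i; rewrite !mxE; have [->|_] := eqVneq i i0; last by rewrite andbF mulr0 addr0.
  by rewrite !eqxx mulr1 z'_a; have := ab i0; lra.
- move=> i /lt_k1[->|ik]; first by rewrite !mxE !eqxx mulr1 z'_a; have := ab i0; lra.
  rewrite !mxE; have [ii0|_] := eqVneq i i0; last by rewrite andbF mulr0 addr0 z'_gt.
  by move: ik; rewrite ii0 ltnn.
Qed.

(* A continuous periodic function attains its maximum on the half-open box
   (a, b]: apply the extreme value theorem on the compact closed box. *)
Lemma periodic_attains_max {R : realType} {d : nat} {a b : 'rV[R]_d} {F : 'rV[R]_d -> R} :
  (forall i, a 0 i < b 0 i) ->
  (forall x i, F (x + (b 0 i - a 0 i) *: delta_mx 0 i) = F x) -> continuous F ->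
  attains_max [set x : 'rV[R]_d | forall i, a 0 i < x 0 i <= b 0 i] F.
Proof.
move=> ab F_per F_cont.
pose K := [set x : 'rV[R]_d | forall i, `[a 0 i, b 0 i]%classic (x ord0 i)].
have K_compact : compact K.
  by apply: (@rV_compact _ _ (fun i => `[a 0 i, b 0 i]%classic)) => i; exact: segment_compact.
have K_ne : K !=set0 by exists a => i /=; rewrite in_itv /= lexx ltW.
have [y yK ymax] := EVT_max_rV K_ne K_compact (continuous_subspaceT F_cont).
have o0 : (0 : 'I_1) = ord0 by apply/val_inj.
have [y' y'_box Fy'] : exists2 y' : 'rV[R]_d, (forall i, a 0 i < y' 0 i <= b 0 i) & F y' = F y.
  apply: periodic_shift_into_box => // i; rewrite o0.
  by move: yK; rewrite inE => /(_ i); rewrite /= in_itv.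
exists y' => // x x_box; rewrite Fy'; apply: ymax; rewrite inE => i /=.
by rewrite in_itv /= -o0; have /andP[/ltW -> ->] := x_box i.
Qed.

Lemma max_or_below_of_cover {R : realType} {T : Type} {Oh K Oc : set T} {u : T -> R} {c : R} :
  Oh `<=` K `|` Oc -> K `<=` Oh -> (forall x, Oc x -> u x <= c) ->
  (K !=set0 -> attains_max K u) ->
  (forall x, Oh x -> u x <= c) \/ attains_max Oh u.
Proof.
move=> Oh_cover KOh u_Oc K_max.
have [K_ne|K_empty] := pselect (K !=set0); last first.
  left => x /Oh_cover [Kx|/u_Oc //]; by exfalso; apply: K_empty; exists x.
have [y Ky ymax] := K_max K_ne.
have [uy_le|uy_gt] := leP (u y) c.
  by left => x /Oh_cover [/ymax/le_trans->|/u_Oc].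
right; exists y; first exact: KOh.
by move=> x /Oh_cover [/ymax //|/u_Oc/le_trans->//]; exact: ltW.
Qed.

Section setting_facts.
Variables (R : realType) (d : nat) (S : setting R d).
Hypothesis S_valid : valid_setting S.

Lemma Bd_sub_Omc : Bd S `<=` Omc S.
Proof.
have [[_ [_ _ _ bdOmc]] _] := S_valid.
by rewrite /Bd /Omc; case: (disc S) => x; [case=> /bdOmc|move/bdOmc].
Qed.

Lemma Omhat_cover : Omhat S `<=` Ombar S `|` Ocstar1 S.
Proof.
move=> x [Omx|Omcx]; first by left; left.
have [Bx|nBx] := pselect (Bd S x); first by left; right.
right; have [e|ne] := pselect (Omc S = Bd S); first by left; rewrite -e.
by right.
Qed.

Lemma Ohat_split x : Ohat S x -> Ostar S x \/ Ocstar S x.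
Proof.
rewrite /Ohat /Ostar /Ocstar; case: (per S); first by left.
move=> /Omhat_cover [[Omx|Bx]|Ocx]; last by right.
  left; have [e|ne] := pselect (Omc S = Bd S); [by left | right].
  by split => //; left.
have [e|ne] := pselect (Omc S = Bd S); [right; left | left; right].
  by split.
by split => //; right.
Qed.

Lemma X_C2_attains_max (u : 'rV[R]_d -> R) : per S -> X_C2 S u ->
  Oplus S !=set0 -> attains_max (Oplus S) u.
Proof.
have [_ [S_disc S_per]] := S_valid.
move=> per_S [_ [F [F_per [F_reg FE]]]] Oplus_ne.
have FE' x : Oplus S x -> F x = u x by move=> Ox; apply: FE; rewrite /Ohat per_S.
have [disc_S|ndisc_S] := boolP (disc S).
  apply: finite_attains_max => //; have [Sig_fin _] := S_disc disc_S.
  by rewrite /Oplus disc_S; exact: finite_setIr.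
have F_cont : continuous F by case: F_reg => //; rewrite (negbTE ndisc_S).
have [ab _] := S_per per_S.
have [y yO ymax] := periodic_attains_max ab F_per F_cont.
have OplusE : Oplus S = [set x | forall i, a S 0 i < x 0 i <= b S 0 i].
  by rewrite /Oplus (negbTE ndisc_S).
rewrite OplusE in FE' *; exists y => // x Ox.
by rewrite -!FE' //; exact: ymax.
Qed.

(* (C1): a function of cal X attains its maximum on bar Omega, which is
   finite in (D2) and the compact closure of Omega in (D1). *)
Lemma calX_C1_attains_max (u : 'rV[R]_d -> R) : calX_C1 S u ->
  Ombar S !=set0 -> attains_max (Ombar S) u.
Proof.
have [[[_ _ Om_bdd _] _] [S_disc _]] := S_valid.
move=> [_ u_cont] Ombar_ne.
have [disc_S|ndisc_S] := boolP (disc S).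
  apply: finite_attains_max => //; have [Sig_fin _] := S_disc disc_S.
  apply: (sub_finite_set _ Sig_fin).
  by rewrite /Ombar /Om /Bd disc_S => x [[]|[]].
have OmbarE : Ombar S = closure (Om0 S).
  rewrite /Ombar /Om /Bd (negbTE ndisc_S) /bdry.
  apply/seteqP; split => [x [Omx|[]//]|x clx]; first exact: subset_closure.
  have [Omx|nOmx] := pselect (Om0 S x); [by left | right; split => //].
  by move/interior_subset.
have u_seq : seq_cont_on (Ombar S) u by case: u_cont => [[]|[_ []]].
have Ombar_compact : compact (Ombar S) by rewrite OmbarE; exact: closure_compact.
have [y yO ymax] := EVT_max_rV Ombar_ne Ombar_compact (seq_cont_within u_seq).
by exists y => [|x xO]; [rewrite inE in yO | apply: ymax; rewrite inE].
Qed.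

Lemma calX_max_or_below (u : 'rV[R]_d -> R) (c : R) :
  calX S u -> (forall x, Ocstar S x -> u x <= c) ->
  (forall x, Ohat S x -> u x <= c) \/ attains_max (Ohat S) u.
Proof.
have [per_S|nper_S] := boolP (per S).
  rewrite /calX /Ohat per_S => u_X _.
  apply: (@max_or_below_of_cover _ _ _ (Oplus S) set0) => //.
  exact: X_C2_attains_max.
rewrite /calX /Ohat /Ocstar (negbTE nper_S) => u_X u_Oc.
apply: (max_or_below_of_cover Omhat_cover) => //.
- by move=> x [Omx|/Bd_sub_Omc Omcx]; [left|right].
- exact: calX_C1_attains_max.
Qed.

End setting_facts.

Lemma seq_cont_on_scale (R : realType) (d : nat) (A : set 'rV[R]_d)
  (u : 'rV[R]_d -> R) (c : R) :
  seq_cont_on A u -> seq_cont_on A (fun x => c * u x).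
Proof. by move=> u_seq x y Ax Ay yx; apply: cvgM; [exact: cvg_cst | exact: u_seq]. Qed.

Lemma bounded_on_scale (R : realType) (d : nat) (A : set 'rV[R]_d)
  (u : 'rV[R]_d -> R) (c : R) :
  bounded_on A u -> bounded_on A (fun x => c * u x).
Proof.
move=> [M u_le]; exists (`|c| * M) => x Ax.
by rewrite normrM ler_wpM2l // u_le.
Qed.

Lemma calX_scale (R : realType) (d : nat) (S : setting R d) (u : 'rV[R]_d -> R) (c : R) :
  calX S u -> calX S (fun x => c * u x).
Proof.
have scale_vanish : vanish_off S u -> vanish_off S (fun x => c * u x).
  by move=> u0 x nx; rewrite u0 ?mulr0.
rewrite /calX; case: (per S).
  move=> [u_vanish [F [F_per [F_reg FE]]]]; split; first exact: scale_vanish.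
  exists (fun x => c * F x); split; first by move=> x i; rewrite F_per.
  split; last by move=> x Ox; rewrite FE.
  case: F_reg => [|F_cont]; [by left | right => x].
  by apply: continuousM; [exact: cst_continuous | exact: F_cont].
move=> [u_vanish u_reg]; split; first exact: scale_vanish.
case: u_reg => [[e u_seq]|[e [u_seq [u_seq' u_bdd]]]]; [left|right]; split => //.
  exact: seq_cont_on_scale.
split; first exact: seq_cont_on_scale.
by split; [exact: seq_cont_on_scale|exact: bounded_on_scale].
Qed.

Lemma has_deriv_within_scale (R : realType) (I : set R) (f : R -> R) (s l c : R) :
  has_deriv_within I f s l -> has_deriv_within I (fun r => c * f r) s (c * l).
Proof.
move=> fd e e_gt0.
have ce_gt0 : 0 < e / (`|c| + 1) by rewrite divr_gt0 // ltr_wpDl.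
have [del del_gt0 fdel] := fd _ ce_gt0; exists del => // h h0 hdel Ih.
rewrite -mulrBr -mulrA -mulrBr normrM.
apply: le_trans (ler_wpM2l (normr_ge0 c) (fdel h h0 hdel Ih)) _.
rewrite mulrA ler_pdivrMr ?ltr_wpDl // mulrC.
by apply: ler_wpM2l; [exact: ltW | rewrite lerDl].
Qed.

Section scheme_step.
Context {R : realType} {d : nat} {S : setting R d}.
Context {DL : set ('rV[R]_d -> R)} {L : ('rV[R]_d -> R) -> ('rV[R]_d -> R)}.
Context {f0 : R -> R} {beta kappa : R} {g : R -> 'rV[R]_d -> R} {tau t0 : R}.
Context {v : 'rV[R]_d -> R} {w : R -> 'rV[R]_d -> R}.
Hypotheses (S_valid : valid_setting S) (L_op : operator_L S DL L).
Hypothesis L_max : forall u x0, DL u -> Ostar S x0 ->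
  (forall x, Ohat S x -> u x <= u x0) -> L u x0 <= 0.
Hypotheses (kappa_ge0 : 0 <= kappa) (tau_gt0 : 0 < tau) (t0_ge0 : 0 <= t0).
Hypothesis N_bound : forall xi : R, `|xi| <= beta -> `|kappa * xi + f0 xi| <= kappa * beta.
Hypothesis g_bound : forall (t : R) x, 0 <= t -> Ocstar S x -> `|g t x| <= beta.
Hypothesis v_bound : forall x, Ohat S x -> `|v x| <= beta.
Hypothesis w_solves : solves_step S DL L kappa f0 g tau t0 v w.

(* Linearity of L on multiples (written as c u + 0 to match [operator_L]). *)
Lemma L_scale (c : R) {u : 'rV[R]_d -> R} {x} : DL u -> Ostar S x ->
  DL (fun y => c * u y + 0) /\ L (fun y => c * u y + 0) x = c * L u x.
Proof.
case: L_op => [[_ DL0] DL_lin L_lin _ _] DLu Ox; split; first exact: DL_lin.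
have L0 : L (fun _ => 0) x = 0.
  have := L_lin 1 _ _ DL0 DL0 x Ox.
  by rewrite (_ : (fun _ => 1 * 0 + 0) = fun _ => 0) ?mul1r ?addr0 ?funeqE //; lra.
by rewrite L_lin // L0 addr0.
Qed.

Lemma signed_step_bound (sigma : R) : `|sigma| = 1 ->
  forall x, Ohat S x -> sigma * w tau x <= beta.
Proof.
move=> sigma1; have [[w_X w_cont] w_DL w_deriv w_bd w_0] := w_solves.
have signed_le (y b : R) : `|y| <= b -> sigma * y <= b.
  by move=> y_le; apply: le_trans (ler_norm _) _; rewrite normrM sigma1 mul1r.
have w_Oc s x : 0 <= s <= tau -> Ocstar S x -> sigma * w s x <= beta.
  move=> s_in Ox; rewrite w_bd //; apply/signed_le/g_bound => //.
  by case/andP: s_in => s_ge0 _; exact: addr_ge0.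
apply: (@max_principle R _ (Ohat S) (Ostar S) (Ocstar S)
  (fun s x => sigma * w s x) tau beta kappa) => //.
- exact: Ohat_split.
- by move=> x Ox; rewrite w_0 //; apply/signed_le/v_bound.
- move=> s s_in e e_gt0; have [del del_gt0 wdel] := w_cont s s_in e e_gt0.
  by exists del => // s' s'_in s's x Ox; rewrite -mulrBr normrM sigma1 mul1r wdel.
- move=> s s_in; apply: calX_max_or_below => //; first exact/calX_scale/w_X.
  by move=> x Ox; exact: w_Oc.
move=> s x0 s_in Ohx0 Ox0 x0_max.
exists (sigma * (L (w s) x0 + Nop kappa f0 v x0 - kappa * w s x0)).
  by apply: has_deriv_within_scale; exact: w_deriv.
have [DLsw Lsw] := L_scale sigma (w_DL s s_in) Ox0.
have Lsw_le : sigma * L (w s) x0 <= 0.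
  rewrite -Lsw; apply: L_max => // x Ox; rewrite !addr0; exact: x0_max.
have N_le : sigma * Nop kappa f0 v x0 <= kappa * beta.
  by apply/signed_le/N_bound/v_bound.
rewrite mulrBr [leRHS]mulrBr mulrDr mulrCA; lra.
Qed.

Lemma step_bound x : Ohat S x -> `|w tau x| <= beta.
Proof.
move=> Ox; have := signed_step_bound _ (normr1 R) x Ox.
have := signed_step_bound _ (normrN1 R) x Ox.
by rewrite mul1r mulN1r ler_norml lerNl => -> ->.
Qed.

End scheme_step.

Theorem theorem3p1 (R : realType) (d : nat) (S : setting R d)
  (DL : set ('rV[R]_d -> R)) (L : ('rV[R]_d -> R) -> ('rV[R]_d -> R))
  (f0 : R -> R) (beta kappa : R)
  (u0 : 'rV[R]_d -> R) (g : R -> 'rV[R]_d -> R) (tau : R)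
  (v : nat -> 'rV[R]_d -> R) (w : nat -> R -> 'rV[R]_d -> R) :
  valid_setting S ->
  operator_L S DL L ->
  A1 S DL L ->
  A2 f0 beta ->
  (forall xi, `|xi| <= beta -> `|derive1 f0 xi| <= kappa) ->
  (* initial datum *)
  calX S u0 -> (forall x, Ohat S x -> `|u0 x| <= beta) ->
  (* boundary datum g in C([0,oo); C_b(Omega_c^* )) (only relevant in (C1)) *)
  (forall t, 0 <= t -> bounded_on (Ocstar S) (g t) /\ seq_cont_on (Ocstar S) (g t)) ->
  (forall t, 0 <= t -> forall e : R, 0 < e -> exists2 del : R, 0 < del &
      forall t', 0 <= t' -> `|t' - t| < del ->
        forall x, Ocstar S x -> `|g t' x - g t x| <= e) ->
  (forall x, Ocstar S x -> g 0 x = u0 x) ->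
  (forall t x, 0 <= t -> Ocstar S x -> `|g t x| <= beta) ->
  (* the ETD1 scheme *)
  0 < tau ->
  (forall x, Ohat S x -> v 0%N x = u0 x) ->
  (forall n, solves_step S DL L kappa f0 g tau (n%:R * tau) (v n) (w n)) ->
  (forall n x, Ohat S x -> v n.+1 x = w n tau x) ->
  forall n x, Ohat S x -> `|v n x| <= beta.
Proof.
move=> S_valid L_op [L_max _ _] f0_A2 f0'_le _ u0_le _ _ _ g_le tau_gt0 v0
  w_solves v_next.
have kappa_ge0 : 0 <= kappa.
  have [_ _ beta_gt0 _] := f0_A2.
  have := f0'_le 0 ltac:(by rewrite normr0 ltW).
  exact: le_trans (normr_ge0 _).
have N_bound := stabilized_nonlinearity_bound f0_A2 f0'_le.
elim=> [|n IHn] x Ox; first by rewrite v0 // u0_le.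
have tn_ge0 : 0 <= n%:R * tau by rewrite mulr_ge0 // ltW.
rewrite v_next //.
exact: (step_bound S_valid L_op L_max kappa_ge0 tau_gt0 tn_ge0 N_bound g_le IHn (w_solves n)).
Qed.
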